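(* Every trigraph $G$ admits a partial contraction sequence of width at most $4\Delta(G)$ whose final quotient is an asymmetric trigraph $H$ with $\Delta(H)\leq\Delta(G)$.
   Context: A trigraph is a finite simple graph whose edges are each colored red or black; $\Delta$ denotes maximum degree (both colors). A trigraph is asymmetric if the automorphism group of its underlying simple graph is trivial. The red degree of a vertex is the number of red edges incident to it. For a partition $\mathcal{P}$ of $V(G)$, the quotient trigraph $G/\mathcal{P}$ has vertex set $\mathcal{P}$; two distinct parts $U,W$ are joined by a black edge if every pair $\{u,w\}$ with $u\in U,w\in W$ is a black edge of $G$, are non-adjacent if no such pair is an edge, and are joined by a red edge otherwise. A partial contraction sequence of an $n$-vertex trigraph $G$ is a sequence $\mathcal{P}_n,\dots,\mathcal{P}_i$ of partitions of $V(G)$ where $\mathcal{P}_n$ is the partition into singletons and each $\mathcal{P}_j$ arises from $\mathcal{P}_{j+1}$ by merging two parts; its width is the maximum red degree over all $G/\mathcal{P}_j$ in the sequence, and its final quotient is $G/\mathcal{P}_i$. *)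

From mathcomp Require Import all_boot.
Set Implicit Arguments. Unset Strict Implicit. Unset Printing Implicit Defensive.

(* A trigraph on a finite vertex type V: [adj] is the (underlying simple graph)
   edge relation, [red] marks the red edges; non-red edges are black. *)
Definition is_trigraph (V : finType) (adj red : rel V) : Prop :=
  irreflexive adj /\ symmetric adj /\ symmetric red /\ subrel red adj.

Section Trigraph.
Variables (V : finType) (adj red : rel V).

Definition maxdeg : nat := \max_(v : V) #|[set w | adj v w]|.

Definition qadj (U W : {set V}) : bool :=
  (U != W) && [exists u in U, exists w in W, adj u w].
Definition qblack (U W : {set V}) : bool :=
  (U != W) && [forall u in U, forall w in W, adj u w && ~~ red u w].
Definition qred (U W : {set V}) : bool := qadj U W && ~~ qblack U W.

Definition qdeg (P : {set {set V}}) (U : {set V}) : nat :=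
  #|[set W in P | qadj U W]|.
Definition qreddeg (P : {set {set V}}) (U : {set V}) : nat :=
  #|[set W in P | qred U W]|.

Definition qmaxdeg (P : {set {set V}}) : nat := \max_(U in P) qdeg P U.
Definition qmaxreddeg (P : {set {set V}}) : nat := \max_(U in P) qreddeg P U.

Definition singletons : {set {set V}} := [set [set x] | x : V].

Definition merge_step (P Q : {set {set V}}) : bool :=
  [exists A in P, exists B in P,
     (A != B) && (Q == ((P :\ A) :\ B) :|: [set A :|: B])].

Definition partial_contraction_seq (s : seq {set {set V}}) : bool :=
  path merge_step singletons s.

Definition pcs_width (s : seq {set {set V}}) : nat :=
  \max_(P <- singletons :: s) qmaxreddeg P.

Definition final_partition (s : seq {set {set V}}) : {set {set V}} :=
  last singletons s.

(* the underlying simple graph of G/P has only the trivial automorphism *)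
Definition q_asymmetric (P : {set {set V}}) : Prop :=
  forall f : {set V} -> {set V},
    {in P, forall U, f U \in P} ->
    {in P &, injective f} ->
    {in P &, forall U W, qadj (f U) (f W) = qadj U W} ->
    {in P, forall U, f U = U}.

End Trigraph.

From mathcomp Require Import all_boot zify.
From Stdlib Require Import Classical_Prop.
Set Implicit Arguments. Unset Strict Implicit. Unset Printing Implicit Defensive.

(* While the quotient G/P has an automorphism g moving some part, number the
   parts along each g-cycle from a root and, for k = 0, 1, 2, ..., merge the
   blocks of 2^k consecutive parts pairwise into blocks of 2^(k+1).  Once 2^k
   exceeds every cycle length each cycle is a single part, and at least two
   parts have been merged.  As g preserves adjacency, every neighbour of a part
   in the block starting at B is g^j u for a neighbour u of B and j < 2^(k+1);
   these 2^(k+1) consecutive positions on the cycle of u meet at most 4 blocks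
   of size 2^k (exactly one at the last level).  Hence every partition between
   two levels has maximum degree at most 4 Delta(G/P), and the last level at most
   Delta(G/P) <= Delta(G), so the process can be repeated until the quotient is
   asymmetric.  Red degrees are bounded by degrees throughout. *)

Definition window_blocks (t c m : nat) : seq nat :=
  undup [seq ((t + j) %% c) %/ m | j <- iota 0 (2 * m)].

Lemma size_window_blocks (t c m : nat) : 0 < m -> t < c ->
  size (window_blocks t c m) <= 4.
Proof.
move=> m_gt0 t_lt_c.
have [no_wrap|wrap] := leqP (t + 2 * m) c.
  apply: leq_trans (_ : size (iota (t %/ m) 3) <= 4); last by rewrite size_iota.
  apply: uniq_leq_size; first exact: undup_uniq.
  move=> e; rewrite mem_undup => /mapP [j]; rewrite mem_iota => /andP [_ j_lt] ->.
  rewrite mem_iota modn_small; last by lia.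
  by rewrite leq_div2r ?leq_addr //=; nia.
pose head_tail := iota (t %/ m) ((c - 1) %/ m - t %/ m + 1)
                  ++ iota 0 ((t + 2 * m - 1 - c) %/ m + 1).
apply: leq_trans (_ : size head_tail <= 4); last by rewrite size_cat !size_iota; nia.
apply: uniq_leq_size; first exact: undup_uniq.
move=> e; rewrite mem_undup => /mapP [j]; rewrite mem_iota => /andP [_ j_lt] ->.
rewrite mem_cat !mem_iota.
have [before|after] := ltnP (t + j) c.
  rewrite modn_small //; apply/orP; left.
  have : (t + j) %/ m <= (c - 1) %/ m by apply: leq_div2r; lia.
  have : t %/ m <= (t + j) %/ m by apply: leq_div2r; lia.
  lia.
apply/orP; right.
have mod_le : (t + j) %% c <= t + j - c.
  by rewrite -{1}(subnK after) modnDr; exact: leq_mod.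
rewrite leq0n add0n addn1 ltnS; apply: leq_div2r; lia.
Qed.

Lemma size_window_blocks_short (t c m : nat) : 0 < c -> c <= m ->
  size (window_blocks t c m) <= 1.
Proof.
move=> c_gt0 c_le_m.
apply: leq_trans (_ : size [:: 0] <= 1) => //.
apply: uniq_leq_size; first exact: undup_uniq.
move=> e; rewrite mem_undup => /mapP [j] _ ->.
by rewrite inE divn_small // (leq_trans _ c_le_m) // ltn_pmod.
Qed.

Lemma merge_step_card (V : finType) (P Q : {set {set V}}) :
  merge_step P Q -> #|Q| < #|P|.
Proof.
case/existsP => A /andP [AP /existsP [B /andP [BP /andP [AB /eqP ->]]]].
rewrite setUC cardsU1 (cardsD1 A P) AP (cardsD1 B (P :\ A)).
have -> : B \in P :\ A by rewrite !inE BP eq_sym AB.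
by case: (_ \notin _) => /=; lia.
Qed.

Lemma merge_path_card (V : finType) (P : {set {set V}}) s :
  path (@merge_step V) P s -> last P s != P -> #|last P s| < #|P|.
Proof.
elim: s P => [|Q s IHs] P /=; first by rewrite eqxx.
case/andP => /merge_step_card PQ Qs _; apply: leq_ltn_trans PQ.
have [->|] := eqVneq (last Q s) Q; first exact: leqnn.
by move/(IHs Q Qs)/ltnW.
Qed.

Definition finer (T K1 K2 : Type) (h1 : T -> K1) (h2 : T -> K2) : Prop :=
  forall v w, h1 v = h1 w -> h2 v = h2 w.

Lemma finer_trans (T K1 K2 K3 : Type) (h1 : T -> K1) (h2 : T -> K2) (h3 : T -> K3) :
  finer h1 h2 -> finer h2 h3 -> finer h1 h3.
Proof. by move=> h12 h23 v w /h12 /h23. Qed.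

Section Fibres.
Variable V : finType.

(* Partitions are handled as the fibres of a key function [h : V -> K]. *)
Definition fibre (K : eqType) (h : V -> K) (x : V) : {set V} :=
  [set v | h v == h x].

Definition fibres (K : eqType) (h : V -> K) : {set {set V}} := fibre h @: setT.

Variable K : eqType.
Implicit Types (h : V -> K) (x y v w : V).

Lemma fibre_id h x : x \in fibre h x.
Proof. by rewrite inE. Qed.

Lemma fibre_eqP h x y : fibre h x = fibre h y <-> h x = h y.
Proof.
split=> [exy|hxy]; last by apply/setP => v; rewrite !inE hxy.
by have := fibre_id h x; rewrite exy inE => /eqP.
Qed.

Lemma eq_fibre h x y : (fibre h x == fibre h y) = (h x == h y).
Proof. by apply/eqP/eqP => /fibre_eqP. Qed.

Lemma fibre_in h x : fibre h x \in fibres h.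
Proof. exact: imset_f. Qed.

Lemma fibresP h X : reflect (exists x, X = fibre h x) (X \in fibres h).
Proof.
by apply: (iffP imsetP) => [[x _ ->]|[x ->]]; exists x.
Qed.

Lemma fibre_of_mem h X z : X \in fibres h -> z \in X -> fibre h z = X.
Proof. by case/fibresP => x -> /[!inE] /eqP /fibre_eqP. Qed.

Definition some_vertex (x : V) (W : {set V}) : V := odflt x [pick z in W].

Lemma some_vertex_in h x W : W \in fibres h -> some_vertex x W \in W.
Proof.
case/fibresP => w ->; rewrite /some_vertex.
by case: pickP => [//|/(_ w)]; rewrite fibre_id.
Qed.

Lemma eq_fibres (K' : eqType) h (h' : V -> K') :
  finer h h' -> finer h' h -> fibres h = fibres h'.
Proof.
move=> hh' h'h; apply: eq_imset => x; apply/setP => v.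
by rewrite !inE; apply/eqP/eqP => [/hh'|/h'h].
Qed.

Lemma fibres_injective h : injective h -> fibres h = singletons V.
Proof.
move=> h_inj; have fibre1 x : fibre h x = [set x].
  by apply/setP => v; rewrite !inE (inj_eq h_inj).
by apply/setP => X; apply/imsetP/imsetP => -[x _ ->]; exists x; rewrite ?fibre1.
Qed.

Section MergeKey.
Variables (h : V -> K) (x y : V).
Hypothesis hxy : h x != h y.

Definition merge_key (v : V) : K := if h v == h y then h x else h v.

Lemma fibre_merge_key v : fibre merge_key v =
  if (h v == h x) || (h v == h y) then fibre h x :|: fibre h y else fibre h v.
Proof.
apply/setP => w; rewrite !inE /merge_key.
have [vy|vy] := eqVneq (h v) (h y).
  by rewrite orbT !inE; case: (eqVneq (h w) (h y)) => [->|_]; rewrite ?eqxx ?orbT ?orbF.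
rewrite orbF; have [vx|vx] := eqVneq (h v) (h x).
  by rewrite vx !inE; case: (eqVneq (h w) (h y)) => [->|_]; rewrite ?eqxx ?orbT ?orbF.
rewrite !inE; case: (eqVneq (h w) (h y)) => [wy|//].
by rewrite wy eq_sym (negbTE vx) eq_sym (negbTE vy).
Qed.

Lemma merge_step_merge_key : merge_step (fibres h) (fibres merge_key).
Proof.
apply/existsP; exists (fibre h x); rewrite fibre_in /=.
apply/existsP; exists (fibre h y); rewrite fibre_in /=.
rewrite eq_fibre hxy.
apply/eqP/setP => X; rewrite !inE; apply/fibresP/idP => [[v ->]|].
  rewrite fibre_merge_key; case: ifP => [_|/norP [vx vy]]; first by rewrite eqxx orbT.
  by rewrite !eq_fibre vx vy fibre_in.
case/orP => [/and3P [Xy Xx /fibresP [v Xv]]|/eqP ->].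
  exists v; rewrite fibre_merge_key ifF //.
  by apply/negbTE/norP; rewrite -!eq_fibre -Xv.
by exists x; rewrite fibre_merge_key eqxx.
Qed.
End MergeKey.

Lemma finer_merge_key h x y : finer h (merge_key h x y).
Proof. by move=> v w hvw; rewrite /merge_key hvw. Qed.

Lemma merge_key_finer (K' : Type) h (h' : V -> K') x y :
  finer h h' -> h' x = h' y -> finer (merge_key h x y) h'.
Proof.
move=> hh' h'xy v w; rewrite /merge_key.
case: (h v =P h y) => [/hh' vy|_]; case: (h w =P h y) => [/hh' wy|_] /hh'.
- by rewrite vy wy.
- by rewrite vy -h'xy.
- by rewrite wy -h'xy.
- by [].
Qed.

Lemma coarsening_path h1 h2 : finer h1 h2 ->
  exists s, [/\ path (@merge_step V) (fibres h1) s, last (fibres h1) s = fibres h2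
    & {in s, forall R, exists h : V -> K, [/\ R = fibres h, finer h1 h & finer h h2]}].
Proof.
move: {2}#|fibres h1|.+1 (ltnSn #|fibres h1|) => n.
elim: n h1 => // n IHn h1 lt_n h12.
have [[x y] /andP [/= hxy /eqP h2xy] | no_pair] :=
  pickP (fun p : V * V => (h1 p.1 != h1 p.2) && (h2 p.1 == h2 p.2)).
  set h := merge_key h1 x y.
  have step : merge_step (fibres h1) (fibres h) := merge_step_merge_key hxy.
  have [s [path_s last_s mid_s]] :=
    IHn h (leq_trans (merge_step_card step) lt_n) (merge_key_finer h12 h2xy).
  exists (fibres h :: s); split => //=; first by rewrite step.
  move=> R /predU1P [->|/mid_s [h' [-> hh' h'h2]]].
    by exists h; split; [|exact: finer_merge_key|exact: merge_key_finer].
  by exists h'; split => //; apply: finer_trans hh'; exact: finer_merge_key.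
exists [::]; split => //; apply: eq_fibres => // v w h2vw.
by move: (no_pair (v, w)) => /= /negbT; rewrite h2vw eqxx andbT negbK => /eqP.
Qed.

End Fibres.

Lemma card_bigcup_le (I T : finType) (A : {pred I}) (S : I -> {set T}) :
  #|\bigcup_(i in A) S i| <= \sum_(i in A) #|S i|.
Proof.
elim/big_rec2: _ => [|i n C _ IH]; first by rewrite cards0.
by apply: leq_trans (leq_card_setU _ _) _; rewrite leq_add2l.
Qed.

Lemma card_map_le_undup (T : finType) (A : eqType) (b : nat -> A) (F : nat -> T) s :
  finer b F -> #|[set y in map F s]| <= size (undup (map b s)).
Proof.
move=> bF; elim: s => [|i s IHs] /=; first by rewrite set_nil cards0.
rewrite set_cons cardsU1; case: ifP => [/mapP [j js /bF Fij]|_] /=.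
  by rewrite inE Fij map_f.
by rewrite -add1n leq_add ?leq_b1.
Qed.

Lemma qdeg_le_qmaxdeg (V : finType) (adj : rel V) (P : {set {set V}}) U :
  U \in P -> qdeg adj P U <= qmaxdeg adj P.
Proof. by move=> UP; rewrite /qmaxdeg (bigD1 U) ?leq_maxl. Qed.

Section Orbits.
Variables (T : finType) (f : T -> T).
Hypothesis f_inj : injective f.

Lemma iter_order_mul x q : iter (order f x * q) f x = x.
Proof. by elim: q => [|q IHq]; rewrite ?muln0 // mulnS iterD IHq (iter_order f_inj). Qed.

Lemma iter_mod_order n x : iter n f x = iter (n %% order f x) f x.
Proof. by rewrite {1}(divn_eq n (order f x)) addnC iterD mulnC iter_order_mul. Qed.

Lemma order_le_card x : order f x <= #|T|.
Proof. by rewrite -size_orbit -(card_uniqP (orbit_uniq f x)) max_card. Qed.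

End Orbits.

Section CycleBlocks.
Variables (V : finType) (adj : rel V) (h0 : V -> {set V} * nat).
Variables (g : {set V} -> {set V}) (D : nat).
Local Notation P := (fibres h0).
Hypotheses (g_inj : injective g) (gP : {in P, forall U, g U \in P}).
Hypothesis g_adj : {in P &, forall U W, qadj adj (g U) (g W) = qadj adj U W}.
Hypothesis degP : qmaxdeg adj P <= D.

Definition cycle_root (U : {set V}) : {set V} := froot g U.
Definition cycle_pos (U : {set V}) : nat := findex g (cycle_root U) U.
Definition cycle_len (U : {set V}) : nat := order g (cycle_root U).

(* Parts on a g-cycle are numbered from its root; [block_key k] identifies the
   block of 2^k consecutive positions containing the part of a vertex. *)
Definition block_key (k : nat) (v : V) : {set V} * nat :=
  (cycle_root (fibre h0 v), cycle_pos (fibre h0 v) %/ 2 ^ k).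

Definition block_start (k : nat) (U : {set V}) : {set V} :=
  iter (cycle_pos U %/ 2 ^ k * 2 ^ k) g (cycle_root U).

Lemma fconnect_cycle_root U : fconnect g (cycle_root U) U.
Proof. by rewrite fconnect_sym //; exact: connect_root. Qed.

Lemma iter_cycle_pos U : iter (cycle_pos U) g (cycle_root U) = U.
Proof. exact/iter_findex/fconnect_cycle_root. Qed.

Lemma cycle_pos_lt U : cycle_pos U < cycle_len U.
Proof. exact/findex_max/fconnect_cycle_root. Qed.

Lemma cycle_root_iter j U : cycle_root (iter j g U) = cycle_root U.
Proof. by apply/esym/(rootP (fconnect_sym g_inj)); exact: fconnect_iter. Qed.

Lemma cycle_pos_iter j U : cycle_pos (iter j g U) = (cycle_pos U + j) %% cycle_len U.
Proof.
rewrite {1}/cycle_pos cycle_root_iter.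
have -> : iter j g U = iter (j + cycle_pos U) g (cycle_root U).
  by rewrite iterD iter_cycle_pos.
by rewrite (iter_mod_order g_inj) addnC findex_iter // ltn_pmod ?order_gt0.
Qed.

Lemma cycle_len_lt U : cycle_len U < 2 ^ #|{set V}|.
Proof. exact: leq_ltn_trans (order_le_card _ _) (ltn_expl _ (ltnSn 1)). Qed.

Lemma iter_in j : {in P, forall U, iter j g U \in P}.
Proof. by move=> U UP; elim: j => //= j; exact: gP. Qed.

Lemma cycle_root_in : {in P, forall U, cycle_root U \in P}.
Proof.
move=> U UP; rewrite /cycle_root -(iter_findex (connect_root _ U)).
exact: iter_in.
Qed.

Lemma block_start_in k : {in P, forall U, block_start k U \in P}.
Proof. by move=> U UP; apply/iter_in/cycle_root_in. Qed.

Lemma qadj_iter j :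
  {in P &, forall U W, qadj adj (iter j g U) (iter j g W) = qadj adj U W}.
Proof. by move=> U W UP WP; elim: j => //= j IHj; rewrite g_adj ?iter_in. Qed.

Lemma iter_onto j W : W \in P -> exists2 U, U \in P & iter j g U = W.
Proof.
move=> WP; exists (iter ((order g W).-1 * j) g W); first exact: iter_in.
by rewrite -iterD -{1}(mul1n j) -mulnDl add1n orderSpred (iter_order_mul g_inj).
Qed.

Lemma eq_block_key k v w : fibre h0 v = fibre h0 w -> block_key k v = block_key k w.
Proof. by rewrite /block_key => ->. Qed.

Lemma finer_block_key k : finer (block_key k) (block_key k.+1).
Proof. by move=> v w; rewrite /block_key expnSr !divnMA => -[-> ->]. Qed.

Lemma fibres_block_key0 : fibres (block_key 0) = P.
Proof.
apply: eq_fibres => v w; last by move/fibre_eqP; exact: eq_block_key.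
rewrite /block_key expn0 !divn1 => -[root_vw pos_vw]; apply/fibre_eqP.
by rewrite -(iter_cycle_pos (fibre h0 v)) -(iter_cycle_pos (fibre h0 w)) root_vw pos_vw.
Qed.

Lemma block_key_iter k x u j : u \in P ->
  block_key k (some_vertex x (iter j g u))
  = (cycle_root u, ((cycle_pos u + j) %% cycle_len u) %/ 2 ^ k).
Proof.
move=> uP; have ujP := iter_in j uP.
rewrite /block_key (fibre_of_mem ujP (some_vertex_in x ujP)).
by rewrite cycle_root_iter cycle_pos_iter.
Qed.

Lemma fibre_from_block_start k x y : block_key k y = block_key k x ->
  fibre h0 y = iter (cycle_pos (fibre h0 y) %% 2 ^ k) g (block_start k (fibre h0 x)).
Proof.
rewrite /block_key /block_start => -[<- <-].
by rewrite -iterD addnC -divn_eq iter_cycle_pos.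
Qed.

Section Between.
Variables (k : nat) (h : V -> {set V} * nat).
Hypotheses (kh : finer (block_key k) h) (hk : finer h (block_key k.+1)).

Lemma qadj_fibre_window x Y : Y \in fibres h -> qadj adj (fibre h x) Y ->
  exists2 u, u \in P /\ qadj adj (block_start k.+1 (fibre h0 x)) u &
    exists2 j, j < 2 ^ k.+1 & Y = fibre h (some_vertex x (iter j g u)).
Proof.
case/fibresP => z0 -> /andP [hx_z0 /existsP [y /andP [y_x /existsP [z /andP [z_z0 yz]]]]].
move: y_x z_z0; rewrite !inE => /eqP hyx /eqP hzz0.
have Yz : fibre h z0 = fibre h z by apply/fibre_eqP.
set jy := cycle_pos (fibre h0 y) %% 2 ^ k.+1.
have Uy := fibre_from_block_start (hk hyx).
(* The neighbour of g^jy B is g^jy of a neighbour u of B. *)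
have [u uP u_z] := iter_onto jy (fibre_in h0 z).
have Uyz : fibre h0 y != fibre h0 z.
  apply: contraNneq hx_z0 => /(eq_block_key k)/kh hyz.
  by rewrite Yz eq_fibre -hyx hyz.
exists u; first split=> //.
  rewrite -(qadj_iter jy) ?block_start_in ?fibre_in // -Uy u_z /qadj Uyz.
  by apply/existsP; exists y; rewrite fibre_id; apply/existsP; exists z; rewrite fibre_id.
exists jy; first by rewrite ltn_pmod ?expn_gt0.
rewrite Yz u_z; apply/fibre_eqP/kh/eq_block_key.
by rewrite (fibre_of_mem (fibre_in h0 z) (some_vertex_in x (fibre_in h0 z))).
Qed.

Lemma qmaxdeg_le_window_blocks M :
  {in P, forall u, size (window_blocks (cycle_pos u) (cycle_len u) (2 ^ k)) <= M} ->
  qmaxdeg adj (fibres h) <= M * D.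
Proof.
move=> windowM; apply/bigmax_leqP => _ /fibresP [x ->].
set B := block_start k.+1 (fibre h0 x).
set N := [set W in P | qadj adj B W].
pose F u j := fibre h (some_vertex x (iter j g u)).
have neighbours : [set Y in fibres h | qadj adj (fibre h x) Y]
    \subset \bigcup_(u in N) [set Y in map (F u) (iota 0 (2 * 2 ^ k))].
  apply/subsetP => Y; rewrite inE => /andP [Yh /(qadj_fibre_window Yh)].
  case=> u [uP Bu] [j j_lt ->]; apply/bigcupP; exists u; first by rewrite inE uP.
  by rewrite inE; apply/mapP; exists j; rewrite // mem_iota -expnS.
apply: leq_trans (subset_leq_card neighbours) _.
apply: leq_trans (card_bigcup_le _ _) _.
apply: (@leq_trans (\sum_(u in N) M)).
  apply: leq_sum => u; rewrite inE => /andP [uP _].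
  apply: leq_trans (windowM u uP); apply: card_map_le_undup => i j bij.
  by apply/fibre_eqP/kh; rewrite !(block_key_iter k x) // bij.
rewrite sum_nat_const mulnC leq_mul2l; apply/orP; right.
by apply: leq_trans degP; apply/qdeg_le_qmaxdeg/block_start_in/fibre_in.
Qed.

End Between.

Lemma qmaxdeg_between_blocks k (h : V -> {set V} * nat) :
  finer (block_key k) h -> finer h (block_key k.+1) -> qmaxdeg adj (fibres h) <= 4 * D.
Proof.
move=> kh hk; apply: (qmaxdeg_le_window_blocks kh hk) => u _.
by rewrite size_window_blocks ?expn_gt0 ?cycle_pos_lt.
Qed.

Lemma block_key_path k : exists s, [/\ path (@merge_step V) P s,
  last P s = fibres (block_key k) & {in s, forall R, qmaxdeg adj R <= 4 * D}].
Proof.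
elim: k => [|k [s [path_s last_s deg_s]]].
  by exists [::]; rewrite fibres_block_key0.
have [s' [path_s' last_s' mid_s']] := coarsening_path (@finer_block_key k).
exists (s ++ s'); rewrite cat_path last_cat path_s last_s; split=> //.
move=> R; rewrite mem_cat => /orP [/deg_s //|/mid_s' [h [-> kh hk]]].
exact: qmaxdeg_between_blocks kh hk.
Qed.

Local Notation n := #|{set V}|.

Lemma block_key_final v : block_key n v = (cycle_root (fibre h0 v), 0).
Proof.
by rewrite /block_key divn_small // (ltn_trans (cycle_pos_lt _)) ?cycle_len_lt.
Qed.

Lemma qmaxdeg_block_key_final : qmaxdeg adj (fibres (block_key n)) <= D.
Proof.
rewrite -[D]mul1n; apply: (qmaxdeg_le_window_blocks (k := n)) => [//||u _].
  exact: finer_block_key.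
by rewrite size_window_blocks_short ?order_gt0 // ltnW ?cycle_len_lt.
Qed.

Lemma fibres_block_key_final_neq U : U \in P -> g U != U -> fibres (block_key n) != P.
Proof.
move=> /[dup] UP /fibresP [x Ux] gU; apply/eqP => finalP.
have /fibresP [y gUy] := gP UP.
have X_in : fibre (block_key n) x \in P by rewrite -finalP fibre_in.
have y_X : y \in fibre (block_key n) x.
  by rewrite inE !block_key_final -Ux -gUy -[g U]/(iter 1 g U) cycle_root_iter eqxx.
move: gU; rewrite gUy Ux (fibre_of_mem X_in y_X).
by rewrite (fibre_of_mem X_in (fibre_id _ x)) eqxx.
Qed.

End CycleBlocks.

Section Contraction.
Variables (V : finType) (adj : rel V).

Lemma not_asymmetric_automorphism (P : {set {set V}}) : ~ q_asymmetric adj P ->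
  exists g : {set V} -> {set V}, [/\ injective g, {in P, forall U, g U \in P},
    {in P &, forall U W, qadj adj (g U) (g W) = qadj adj U W}
    & exists2 U, U \in P & g U != U].
Proof.
move=> not_asym.
have [f [fP f_inj f_adj [U UP fU]]] : exists f : {set V} -> {set V},
    [/\ {in P, forall U, f U \in P}, {in P &, injective f},
        {in P &, forall U W, qadj adj (f U) (f W) = qadj adj U W}
      & exists2 U, U \in P & f U != U].
  apply: NNPP => no_f; apply: not_asym => f fP f_inj f_adj U UP.
  by apply: NNPP => /eqP fU; apply: no_f; exists f; split=> //; exists U.
pose g W := if W \in P then f W else W.
exists g; split; rewrite /g.
- move=> W1 W2; case: ifP => W1P; case: ifP => W2P // eqW.
  + exact: f_inj.
  + by move: (fP W1 W1P); rewrite eqW W2P.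
  + by move: (fP W2 W2P); rewrite -eqW W1P.
- by move=> W WP; rewrite WP fP.
- by move=> W1 W2 W1P W2P; rewrite W1P W2P f_adj.
- by exists U; rewrite ?UP.
Qed.

Lemma asymmetric_contraction (D : nat) (h0 : V -> {set V} * nat) :
  qmaxdeg adj (fibres h0) <= D ->
  exists s, [/\ path (@merge_step V) (fibres h0) s,
    {in s, forall R, qmaxdeg adj R <= 4 * D},
    q_asymmetric adj (last (fibres h0) s) & qmaxdeg adj (last (fibres h0) s) <= D].
Proof.
move: {2}#|fibres h0|.+1 (ltnSn #|fibres h0|) => m.
elim: m h0 => // m IHm h0 lt_m degP.
have [asym|/not_asymmetric_automorphism] := classic (q_asymmetric adj (fibres h0)).
  by exists [::].
case=> g [g_inj gP g_adj [U UP gU]].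
have [s [path_s last_s deg_s]] := block_key_path g_inj gP g_adj degP #|{set V}|.
have lt_final : #|fibres (block_key h0 g #|{set V}|)| < m.
  rewrite -last_s -ltnS; apply: leq_trans lt_m; rewrite ltnS.
  by rewrite merge_path_card // last_s (fibres_block_key_final_neq g_inj gP UP).
have [s' [path_s' deg_s' asym deg_final]] :=
  IHm _ lt_final (qmaxdeg_block_key_final g_inj gP g_adj degP).
exists (s ++ s'); rewrite cat_path last_cat last_s path_s; split=> //.
by move=> R; rewrite mem_cat => /orP [/deg_s|/deg_s'].
Qed.

Lemma qmaxdeg_singletons : qmaxdeg adj (singletons V) <= maxdeg adj.
Proof.
apply/bigmax_leqP => _ /imsetP [x _ ->].
have sub : [set W in singletons V | qadj adj [set x] W]
    \subset [set [set w] | w in [set w | adj x w]].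
  apply/subsetP => W; rewrite inE => /andP [/imsetP [w _ ->]].
  case/andP => _ /existsP [u /andP [/set1P -> /existsP [w' /andP [/set1P -> xw]]]].
  by rewrite imset_f ?inE.
apply: leq_trans (subset_leq_card sub) _; apply: leq_trans (leq_imset_card _ _) _.
exact: (leq_bigmax_cond (F := fun v => #|[set w | adj v w]|) x).
Qed.

Lemma qmaxreddeg_le_qmaxdeg red (P : {set {set V}}) :
  qmaxreddeg adj red P <= qmaxdeg adj P.
Proof.
apply/bigmax_leqP => U UP; apply: leq_trans (qdeg_le_qmaxdeg adj UP).
by apply/subset_leq_card/subsetP => W; rewrite !inE => /andP [-> /andP []].
Qed.

End Contraction.

Theorem mainTheorem15 (V : finType) (adj red : rel V) :
  is_trigraph adj red ->
  exists s : seq {set {set V}},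
    [/\ partial_contraction_seq s,
        pcs_width adj red s <= 4 * maxdeg adj,
        q_asymmetric adj (final_partition s)
      & qmaxdeg adj (final_partition s) <= maxdeg adj].
Proof.
move=> _.
have single_inj : injective (fun v : V => ([set v], 0)) by move=> v w [/set1_inj].
have := qmaxdeg_singletons adj; rewrite -(fibres_injective single_inj).
case/asymmetric_contraction=> s; rewrite (fibres_injective single_inj).
case=> path_s deg_s asym deg_final; exists s; split=> //.
apply/bigmax_leqP_seq => R R_s _; apply: leq_trans (qmaxreddeg_le_qmaxdeg _ _ _) _.
case/predU1P: R_s => [->|/deg_s //].
exact: leq_trans (qmaxdeg_singletons adj) (leq_pmull _ _).
Qed.
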